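(* Let $n$ be a positive integer and let $u$ denote the unique positive real root of $$x^{2n+1} + x^{2n} + \cdots + x^{n} - x^{n-1} - x^{n-2} - \cdots - x - 1 = 0$$ (so $u\in(0,1)$). Then $$2\,\mathrm{Li}_2\!\left(u^{n+2}\right) - 2\,\mathrm{Li}_2\!\left(u^{n}\right) - \mathrm{Li}_2\!\left(u^2\right) - n^2 \log^2(u) = -\zeta(2).$$
   Context: $\mathrm{Li}_2(z)=\sum_{k\ge1} z^k/k^2$ for $|z|\le 1$ is the dilogarithm, $\log$ is the real natural logarithm, and $\zeta(2)=\pi^2/6$. *)

From Stdlib Require Import Reals.
From Coquelicot Require Import Coquelicot.
Open Scope R_scope.

(* Dilogarithm Li_2(z) = sum_{k>=1} z^k / k^2 (intended for |z| <= 1,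
   where the series converges). *)
Definition Li2 (z : R) : R :=
  Series (fun k : nat => z ^ (S k) / (INR (S k)) ^ 2).

Definition zeta2 : R := PI ^ 2 / 6.

Definition Pn (n : nat) (x : R) : R :=
  sum_f_R0 (fun k => x ^ (n + k)) (n + 1) - sum_f_R0 (fun k => x ^ k) (n - 1).

(* With a = u^n, multiplying P_n(u) = 0 by u - 1 gives a^2 u^2 = 2a - 1, so that
   u^2 = (2a - 1)/a^2, u^(n+2) = 2 - 1/a and 1/2 < a < 1.  The claim thus becomes
     2 Li2(2 - 1/a) - 2 Li2(a) - Li2((2a - 1)/a^2) - ln^2 a = -zeta(2)  on (1/2, 1).
   As Li2'(x) = -ln(1 - x)/x, the left-hand side has zero derivative there, and as
   a -> 1 all three arguments tend to 1, so it equals -Li2(1).  Finally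
   Li2(1) = pi^2/6 is the Basel problem, proved with Matsuoka's integrals
   int_0^(pi/2) x^2 cos^(2n) x dx. *)

From Stdlib Require Import Reals Lra Lia.
From Coquelicot Require Import Coquelicot.
Open Scope R_scope.

Ltac smooth_continuous :=
  apply (@ex_derive_continuous R_AbsRing R_NormedModule); auto_derive; auto.

Lemma is_lim_seq_of_dist_le (s : nat -> R) (l K : R) :
  (forall N, Rabs (s N - l) <= K / (INR N + 2)) -> is_lim_seq s l.
Proof.
  intros Hs.
  assert (Hinv : is_lim_seq (fun N => K / (INR N + 2)) 0).
  { assert (H := is_lim_seq_inv INR p_infty is_lim_seq_INR ltac:(discriminate)).
    apply (is_lim_seq_incr_n _ 2), (is_lim_seq_scal_l _ K) in H.
    rewrite Rbar_mult_0_r in H.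
    refine (is_lim_seq_ext _ _ _ _ H). intros N. rewrite plus_INR. reflexivity. }
  apply (is_lim_seq_le_le (fun N => l - K / (INR N + 2)) _ (fun N => l + K / (INR N + 2))).
  - intros N. specialize (Hs N). apply Rabs_le_between in Hs. lra.
  - replace (Finite l) with (Rbar_minus l 0) by (simpl; f_equal; ring).
    apply is_lim_seq_minus'; [apply is_lim_seq_const | exact Hinv].
  - replace (Finite l) with (Rbar_plus l 0) by (simpl; f_equal; ring).
    apply is_lim_seq_plus'; [apply is_lim_seq_const | exact Hinv].
Qed.

Section LinearCombination.

Variables (f1 f2 f3 : R -> R) (c1 c2 c3 : R).
Hypotheses (H1 : forall x, continuous f1 x) (H2 : forall x, continuous f2 x)
  (H3 : forall x, continuous f3 x).

Let lincomb (x : R) : R := c1 * f1 x + c2 * f2 x + c3 * f3 x.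

Lemma continuous_lincomb3 (x : R) : continuous lincomb x.
Proof.
  apply continuity_pt_filterlim. unfold lincomb.
  repeat apply continuity_pt_plus.
  all: apply continuity_pt_scal, continuity_pt_filterlim; first [apply H1 | apply H2 | apply H3].
Qed.

Lemma RInt_lincomb3 (a b : R) :
  RInt lincomb a b = c1 * RInt f1 a b + c2 * RInt f2 a b + c3 * RInt f3 a b.
Proof.
  assert (Hex : forall g, (forall x, continuous g x) -> ex_RInt g a b)
    by (intros g Hg; apply (ex_RInt_continuous (V := R_CompleteNormedModule)); auto).
  rewrite (RInt_ext _ (fun x => plus (plus (scal c1 (f1 x)) (scal c2 (f2 x))) (scal c3 (f3 x))))
    by reflexivity.
  rewrite !(RInt_plus (V := R_CompleteNormedModule)), !(RInt_scal (V := R_CompleteNormedModule)).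
  - reflexivity.
  1-3: apply Hex; assumption.
  3: apply (ex_RInt_plus (V := R_CompleteNormedModule)).
  all: apply (ex_RInt_scal (V := R_CompleteNormedModule)); apply Hex; assumption.
Qed.

Lemma RInt_derive_lincomb (f df : R -> R) (a b : R) :
  (forall x, is_derive f x (df x)) -> (forall x, df x = lincomb x) ->
  f b - f a = c1 * RInt f1 a b + c2 * RInt f2 a b + c3 * RInt f3 a b.
Proof.
  intros Hf Hdf. rewrite <- RInt_lincomb3.
  assert (Hd : forall x, is_derive f x (lincomb x)) by (intros x; rewrite <- Hdf; apply Hf).
  symmetry. exact (is_RInt_unique _ _ _ _
    (is_RInt_derive f lincomb a b (fun x _ => Hd x) (fun x _ => continuous_lincomb3 x))).
Qed.

End LinearCombination.

Lemma eq_of_is_derive_0 (f : R -> R) (lo hi a b : R) :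
  (forall x, lo < x < hi -> is_derive f x 0) -> lo < a < hi -> lo < b < hi -> f a = f b.
Proof.
  intros Hf Ha Hb.
  assert (Hin : forall x, Rmin a b <= x <= Rmax a b -> lo < x < hi).
  { intros x Hx. split.
    - apply Rlt_le_trans with (Rmin a b); [apply Rmin_glb_lt |]; lra.
    - apply Rle_lt_trans with (Rmax a b); [| apply Rmax_lub_lt]; lra. }
  destruct (MVT_gen f a b (fun _ => 0)) as [c [_ Hc]].
  - intros x Hx. apply Hf, Hin. lra.
  - intros x Hx. apply continuity_pt_filterlim.
    apply (ex_derive_continuous (K := R_AbsRing) (V := R_NormedModule)).
    eexists. apply Hf, Hin, Hx.
  - lra.
Qed.

Lemma Rabs_lt_CV_radius (a : nat -> R) (x : R) :
  (forall k, Rabs (a k) <= 1) -> Rabs x < 1 -> Rbar_lt (Rabs x) (CV_radius a).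
Proof.
  intros Ha Hx. destruct (CV_radius_bounded a) as [Hub _].
  assert (H1 : Rbar_le 1 (CV_radius a)).
  { apply Hub. exists 1. intros k. rewrite pow1, Rmult_1_r. apply Ha. }
  destruct (CV_radius a); simpl in *; auto; lra.
Qed.

Lemma pow_le_1 (x : R) (m : nat) : 0 <= x <= 1 -> 0 <= x ^ m <= 1.
Proof.
  intros Hx. split; [apply pow_le; lra |].
  induction m as [|m IH]; simpl; [lra |]. pose proof (pow_le x m). nra.
Qed.

Lemma one_sub_pow_le (x : R) (m : nat) : 0 <= x <= 1 -> 1 - x ^ m <= INR m * (1 - x).
Proof.
  intros Hx. induction m as [|m IH]; [simpl; lra |].
  rewrite S_INR, <- tech_pow_Rmult. pose proof (pow_le_1 x m Hx). nra.
Qed.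

Lemma one_sub_inv_le_ln (t : R) : 0 < t -> 1 - 1 / t <= ln t.
Proof.
  intros Ht. pose proof (exp_ineq1_le (- ln t)) as H.
  rewrite exp_Ropp, exp_ln in H by lra. unfold Rdiv. lra.
Qed.

(** * Wallis integrals and the Basel problem *)

(* [auto_derive] leaves identities that hold only modulo [sin^2 + cos^2 = 1];
   the caller supplies the cofactor [c]. *)
Lemma eq_mod_sin2_cos2 (x c l r : R) : l = r + c * (sin x ^ 2 + cos x ^ 2 - 1) -> l = r.
Proof.
  intros ->. replace (sin x ^ 2 + cos x ^ 2 - 1) with 0 by (rewrite <- (sin2_cos2 x); unfold Rsqr; ring).
  ring.
Qed.

Lemma is_derive_sin_mul_cos_pow (k : nat) (x : R) :
  is_derive (fun x => sin x * cos x ^ S k) x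
    ((INR k + 2) * cos x ^ (k + 2) - (INR k + 1) * cos x ^ k).
Proof.
  auto_derive; auto.
  apply (eq_mod_sin2_cos2 x (- (INR k + 1) * cos x ^ k)).
  destruct k; rewrite ?S_INR, Nat.add_comm; simpl; ring.
Qed.

(* Integrated over [0, pi/2], this is Matsuoka's double integration by parts. *)
Lemma is_derive_matsuoka (n : nat) (x : R) :
  is_derive (fun x => x * cos x ^ (2 * n + 2) + (INR n + 1) * (x ^ 2 * sin x * cos x ^ (2 * n + 1))) x
    (cos x ^ (2 * n + 2)
     + (INR n + 1) * x ^ 2 * ((2 * INR n + 2) * cos x ^ (2 * n + 2) - (2 * INR n + 1) * cos x ^ (2 * n))).
Proof.
  assert (Hk : INR (2 * n) = 2 * INR n) by (rewrite mult_INR; reflexivity).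
  revert Hk. generalize (2 * n)%nat as k. intros k Hk.
  auto_derive; auto.
  apply (eq_mod_sin2_cos2 x (- (INR n + 1) * (2 * INR n + 1) * x ^ 2 * cos x ^ k)).
  rewrite !plus_INR, Hk, !(Nat.add_comm k). simpl. ring.
Qed.

Definition cos_pow_int (n : nat) : R := RInt (fun x => cos x ^ (2 * n)) 0 (PI / 2).
Definition sq_cos_pow_int (n : nat) : R := RInt (fun x => x ^ 2 * cos x ^ (2 * n)) 0 (PI / 2).

Lemma cos_pow_int_succ (n : nat) :
  (2 * INR n + 2) * cos_pow_int (S n) = (2 * INR n + 1) * cos_pow_int n.
Proof.
  assert (H := RInt_derive_lincomb (fun x => cos x ^ (2 * S n)) (fun x => cos x ^ (2 * n))
    (fun _ => 0) (2 * INR n + 2) (- (2 * INR n + 1)) 0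
    ltac:(intros; smooth_continuous) ltac:(intros; smooth_continuous) ltac:(intros; smooth_continuous)
    _ _ 0 (PI / 2) (is_derive_sin_mul_cos_pow (2 * n))
    ltac:(intros x; rewrite mult_INR, Nat.mul_succ_r; simpl; ring)).
  cbv beta in H. rewrite cos_PI2, sin_0, pow_ne_zero in H by lia. unfold cos_pow_int. lra.
Qed.

Lemma sq_cos_pow_int_succ (n : nat) :
  cos_pow_int (S n) + 2 * (INR n + 1) ^ 2 * sq_cos_pow_int (S n)
  = (INR n + 1) * (2 * INR n + 1) * sq_cos_pow_int n.
Proof.
  assert (H := RInt_derive_lincomb (fun x => cos x ^ (2 * S n))
    (fun x => x ^ 2 * cos x ^ (2 * S n)) (fun x => x ^ 2 * cos x ^ (2 * n))
    1 ((INR n + 1) * (2 * INR n + 2)) (- (INR n + 1) * (2 * INR n + 1))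
    ltac:(intros; smooth_continuous) ltac:(intros; smooth_continuous) ltac:(intros; smooth_continuous)
    _ _ 0 (PI / 2) (is_derive_matsuoka n)
    ltac:(intros x; rewrite Nat.mul_succ_r; ring)).
  cbv beta in H. rewrite cos_PI2, sin_0, !pow_ne_zero in H by lia.
  unfold cos_pow_int, sq_cos_pow_int. lra.
Qed.

Lemma cos_pow_int_0 : cos_pow_int 0 = PI / 2.
Proof.
  unfold cos_pow_int. rewrite (RInt_ext _ (fun _ => 1)) by reflexivity.
  rewrite RInt_const. unfold scal; simpl; unfold mult; simpl. ring.
Qed.

Lemma sq_cos_pow_int_0 : sq_cos_pow_int 0 = PI ^ 3 / 24.
Proof.
  assert (H := RInt_derive_lincomb (fun x => x ^ 2 * cos x ^ (2 * 0)) (fun _ => 0) (fun _ => 0) 1 0 0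
    ltac:(intros; smooth_continuous) ltac:(intros; smooth_continuous) ltac:(intros; smooth_continuous)
    (fun x => x ^ 3 / 3) (fun x => x ^ 2) 0 (PI / 2)
    ltac:(intros x; auto_derive; auto; field)
    ltac:(intros x; simpl; ring)).
  unfold sq_cos_pow_int. lra.
Qed.

Lemma cos_pow_int_pos (n : nat) : 0 < cos_pow_int n.
Proof.
  induction n as [|n IH].
  - rewrite cos_pow_int_0. pose proof PI_RGT_0. lra.
  - pose proof (cos_pow_int_succ n). pose proof (pos_INR n). nra.
Qed.

Lemma sin_ge_third (x : R) : 0 <= x <= PI / 2 -> x / 3 <= sin x.
Proof.
  intros Hx. pose proof PI_4.
  assert (Hx2 : x ^ 2 <= 4) by nra.
  assert (Hx5 : 0 <= x ^ 5) by (apply pow_le; lra).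
  destruct (SIN x) as [Hlb _]; try lra.
  unfold sin_lb, sin_approx, sin_term in Hlb. simpl in Hlb.
  nra.
Qed.

(* [cos^(2n) - cos^(2n+2) = sin^2 cos^(2n)] and [x <= 3 sin x] on [0, pi/2]. *)
Lemma sq_cos_pow_int_le (n : nat) :
  0 <= sq_cos_pow_int n <= 9 * (cos_pow_int n - cos_pow_int (S n)).
Proof.
  pose proof PI_RGT_0.
  assert (Hex : ex_RInt (fun x => x ^ 2 * cos x ^ (2 * n)) 0 (PI / 2))
    by (apply (ex_RInt_continuous (V := R_CompleteNormedModule)); intros; smooth_continuous).
  assert (Hpow : forall x, 0 <= cos x ^ (2 * n))
    by (intros x; rewrite pow_mult; apply pow_le, pow2_ge_0).
  split.
  - apply RInt_ge_0; [lra | exact Hex |].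
    intros x _. apply Rmult_le_pos; [apply pow2_ge_0 | apply Hpow].
  - assert (E := RInt_lincomb3 (fun x => cos x ^ (2 * n)) (fun x => cos x ^ (2 * S n)) (fun _ => 0)
      9 (-9) 0 ltac:(intros; smooth_continuous) ltac:(intros; smooth_continuous)
      ltac:(intros; smooth_continuous) 0 (PI / 2)).
    unfold cos_pow_int, sq_cos_pow_int.
    replace (9 * _) with (RInt (fun x => 9 * cos x ^ (2 * n) + -9 * cos x ^ (2 * S n) + 0 * 0) 0 (PI / 2))
      by lra.
    apply RInt_le; [lra | exact Hex | |].
    { apply (ex_RInt_continuous (V := R_CompleteNormedModule)); intros; smooth_continuous. }
    intros x Hx.
    assert (Hsin : x ^ 2 <= 9 * sin x ^ 2) by (pose proof (sin_ge_third x ltac:(lra)); nra).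
    assert (Hpyth : sin x ^ 2 = 1 - cos x ^ 2) by (rewrite <- (sin2_cos2 x); unfold Rsqr; ring).
    rewrite Nat.mul_succ_r, pow_add. pose proof (Hpow x). nra.
Qed.

Definition basel_remainder (n : nat) : R := 2 * sq_cos_pow_int n / cos_pow_int n.

Lemma basel_remainder_succ (n : nat) :
  basel_remainder n - basel_remainder (S n) = 1 / (INR n + 1) ^ 2.
Proof.
  unfold basel_remainder.
  pose proof (cos_pow_int_succ n) as HA. pose proof (sq_cos_pow_int_succ n) as HB.
  pose proof (cos_pow_int_pos n). pose proof (cos_pow_int_pos (S n)). pose proof (pos_INR n).
  replace (sq_cos_pow_int (S n)) with
    (((INR n + 1) * (2 * INR n + 1) * sq_cos_pow_int n - cos_pow_int (S n)) / (2 * (INR n + 1) ^ 2))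
    by (field_simplify_eq; lra).
  replace (cos_pow_int n) with ((2 * INR n + 2) * cos_pow_int (S n) / (2 * INR n + 1))
    by (field_simplify_eq; lra).
  field. lra.
Qed.

Lemma basel_remainder_0 : basel_remainder 0 = PI ^ 2 / 6.
Proof.
  unfold basel_remainder. rewrite cos_pow_int_0, sq_cos_pow_int_0.
  field. apply PI_neq0.
Qed.

Lemma basel_partial_sum (N : nat) :
  sum_f_R0 (fun k => 1 / INR (S k) ^ 2) N = PI ^ 2 / 6 - basel_remainder (S N).
Proof.
  rewrite <- basel_remainder_0.
  induction N as [|N IH].
  - simpl. pose proof (basel_remainder_succ 0). simpl INR in *. lra.
  - rewrite tech5, IH, (S_INR (S N)). pose proof (basel_remainder_succ (S N)). lra.
Qed.

Lemma basel_remainder_bound (n : nat) : 0 <= basel_remainder n <= 9 / (INR n + 1).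
Proof.
  unfold basel_remainder.
  pose proof (sq_cos_pow_int_le n). pose proof (cos_pow_int_succ n).
  pose proof (cos_pow_int_pos n). pose proof (pos_INR n).
  split.
  - apply Rmult_le_pos; [lra | apply Rlt_le, Rinv_0_lt_compat; lra].
  - apply (Rmult_le_reg_r (cos_pow_int n * (INR n + 1))); [nra |].
    field_simplify; [nra | lra | lra].
Qed.

Lemma is_series_basel : is_series (fun k => 1 / INR (S k) ^ 2) (PI ^ 2 / 6).
Proof.
  apply is_series_Reals, is_lim_seq_Reals, (is_lim_seq_of_dist_le _ _ 9).
  intros N. rewrite basel_partial_sum.
  pose proof (basel_remainder_bound (S N)) as Hrem.
  rewrite S_INR in Hrem. replace (INR N + 1 + 1) with (INR N + 2) in Hrem by ring.
  rewrite Rabs_left1; lra.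
Qed.

(** * The dilogarithm as a power series *)

Definition polylog_coef (m k : nat) : R :=
  match k with O => 0 | S j => 1 / INR (S j) ^ m end.

Lemma polylog_coef_bound (m k : nat) : Rabs (polylog_coef m k) <= 1.
Proof.
  destruct k as [|j]; [simpl; rewrite Rabs_R0; lra |].
  change (Rabs (1 / INR (S j) ^ m) <= 1).
  assert (Hj : 1 <= INR (S j)) by (apply (le_INR 1); lia).
  assert (Hpow : 1 <= INR (S j) ^ m) by (apply pow_R1_Rle; lra).
  rewrite Rabs_right by (apply Rle_ge, Rlt_le, Rdiv_lt_0_compat; lra).
  unfold Rdiv. rewrite Rmult_1_l, <- Rinv_1. apply Rinv_le_contravar; lra.
Qed.

Lemma PSeries_polylog_coef_converges (m : nat) (x : R) :
  Rabs x < 1 -> Rbar_lt (Rabs x) (CV_radius (polylog_coef m)).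
Proof. intros Hx. apply Rabs_lt_CV_radius; [apply polylog_coef_bound | exact Hx]. Qed.

Lemma Li2_PSeries (x : R) : Rabs x < 1 -> Li2 x = PSeries (polylog_coef 2) x.
Proof.
  intros Hx. unfold PSeries, Li2.
  rewrite (Series_incr_1 (fun k => polylog_coef 2 k * x ^ k))
    by apply ex_series_Rabs, CV_disk_inside, PSeries_polylog_coef_converges, Hx.
  change (polylog_coef 2 0) with 0. rewrite Rmult_0_l, Rplus_0_l.
  apply Series_ext. intros k. cbv beta iota delta [polylog_coef]. field.
  apply not_0_INR; lia.
Qed.

Lemma mul_PSeries_derive_polylog_coef (m : nat) (x : R) : Rabs x < 1 ->
  x * PSeries (PS_derive (polylog_coef (S m))) x = PSeries (polylog_coef m) x.
Proof.
  intros Hx. unfold PSeries.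
  rewrite (Series_incr_1 (fun k => polylog_coef m k * x ^ k))
    by apply ex_series_Rabs, CV_disk_inside, PSeries_polylog_coef_converges, Hx.
  change (polylog_coef m 0) with 0. rewrite Rmult_0_l, Rplus_0_l, <- Series_scal_l.
  apply Series_ext. intros k. cbv beta iota delta [PS_derive polylog_coef]. rewrite <- !tech_pow_Rmult. field.
  assert (INR (S k) <> 0) by (apply not_0_INR; lia). split; [apply pow_nonzero |]; assumption.
Qed.

Lemma PSeries_derive_polylog_coef_1 (x : R) : Rabs x < 1 ->
  PSeries (PS_derive (polylog_coef 1)) x = / (1 - x).
Proof.
  intros Hx. rewrite <- (is_series_unique _ _ (is_series_geom x Hx)).
  apply Series_ext. intros k. cbv beta iota delta [PS_derive polylog_coef]. field.
  apply not_0_INR; lia.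
Qed.

Lemma PSeries_polylog_coef_1 (x : R) : Rabs x < 1 -> PSeries (polylog_coef 1) x = - ln (1 - x).
Proof.
  intros Hx.
  assert (Hd : forall y, -1 < y < 1 -> is_derive (fun y => PSeries (polylog_coef 1) y + ln (1 - y)) y 0).
  { intros y Hy. assert (Hy' : Rabs y < 1) by (apply Rabs_def1; lra).
    auto_derive.
    - split; [| split; [lra | exact I]].
      apply ex_derive_PSeries, PSeries_polylog_coef_converges, Hy'.
    - rewrite Derive_PSeries, PSeries_derive_polylog_coef_1 by (try apply PSeries_polylog_coef_converges; exact Hy').
      field. lra. }
  apply Rabs_def2 in Hx.
  assert (H := eq_of_is_derive_0 _ (-1) 1 x 0 Hd ltac:(lra) ltac:(lra)).
  cbv beta in H. rewrite PSeries_0, Rminus_0_r, ln_1 in H. simpl in H. lra.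
Qed.

Lemma is_derive_Li2 (x : R) : Rabs x < 1 -> x <> 0 -> is_derive Li2 x (- ln (1 - x) / x).
Proof.
  intros Hx Hx0.
  replace (- ln (1 - x) / x) with (PSeries (PS_derive (polylog_coef 2)) x).
  2: { rewrite <- PSeries_polylog_coef_1, <- mul_PSeries_derive_polylog_coef by exact Hx. field. exact Hx0. }
  apply is_derive_ext_loc with (PSeries (polylog_coef 2)).
  - apply Rabs_def2 in Hx.
    apply (locally_interval _ x (-1) 1); simpl; try lra.
    intros y H1 H2. symmetry. apply Li2_PSeries, Rabs_def1; lra.
  - apply is_derive_PSeries, PSeries_polylog_coef_converges, Hx.
Qed.

Lemma ex_series_Li2 (x : R) : 0 <= x <= 1 -> ex_series (fun k => x ^ S k / INR (S k) ^ 2).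
Proof.
  intros Hx. apply (ex_series_le (K := R_AbsRing) (V := R_CompleteNormedModule) _ (fun k => 1 / INR (S k) ^ 2)).
  - intros k. change (Rabs (x ^ S k / INR (S k) ^ 2) <= 1 / INR (S k) ^ 2).
    pose proof (pow_le_1 x (S k) Hx). assert (0 < INR (S k) ^ 2) by (apply pow_lt, lt_0_INR; lia).
    rewrite Rabs_right; unfold Rdiv.
    + apply Rmult_le_compat_r; [apply Rlt_le, Rinv_0_lt_compat |]; lra.
    + apply Rle_ge, Rmult_le_pos; [| apply Rlt_le, Rinv_0_lt_compat]; lra.
  - exists (PI ^ 2 / 6). apply is_series_basel.
Qed.

Lemma Li2_1 : Li2 1 = zeta2.
Proof.
  unfold Li2, zeta2. rewrite <- (is_series_unique _ _ is_series_basel).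
  apply Series_ext. intros k. rewrite pow1. reflexivity.
Qed.

Lemma zeta2_sub_Li2_bound (x : R) (N : nat) : 0 <= x <= 1 ->
  0 <= zeta2 - Li2 x <= (INR N + 1) * (1 - x) + 9 / (INR N + 2).
Proof.
  intros Hx.
  assert (Hterm : forall k, 0 <= x ^ S k / INR (S k) ^ 2 <= 1 / INR (S k) ^ 2).
  { intros k. pose proof (pow_le_1 x (S k) Hx). assert (0 < INR (S k) ^ 2) by (apply pow_lt, lt_0_INR; lia).
    unfold Rdiv. split; [apply Rmult_le_pos | apply Rmult_le_compat_r]; try apply Rlt_le, Rinv_0_lt_compat; lra. }
  split.
  - rewrite <- Li2_1. enough (Li2 x <= Li2 1) by lra.
    unfold Li2. apply Series_le; [| apply ex_series_Li2; lra].
    intros k. rewrite pow1. apply Hterm.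
  - assert (Hpartial : sum_f_R0 (fun k => x ^ S k / INR (S k) ^ 2) N <= Li2 x).
    { apply sum_incr; [apply is_series_Reals, Series_correct, ex_series_Li2, Hx |].
      intros k. apply Hterm. }
    assert (Hdiff : sum_f_R0 (fun k => 1 / INR (S k) ^ 2 - x ^ S k / INR (S k) ^ 2) N
                    <= sum_f_R0 (fun _ => 1 - x) N).
    { apply sum_Rle. intros k _.
      pose proof (one_sub_pow_le x (S k) Hx). assert (1 <= INR (S k)) by (apply (le_INR 1); lia).
      replace (1 / INR (S k) ^ 2 - x ^ S k / INR (S k) ^ 2) with ((1 - x ^ S k) / INR (S k) ^ 2) by (field; lra).
      apply (Rmult_le_reg_r (INR (S k) ^ 2)); [nra |]. unfold Rdiv.
      rewrite Rmult_assoc, Rinv_l, Rmult_1_r by nra.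
      assert (0 <= (INR (S k) ^ 2 - INR (S k)) * (1 - x)) by (apply Rmult_le_pos; nra).
      nra. }
    rewrite minus_sum, sum_cte, basel_partial_sum, S_INR in Hdiff.
    pose proof (basel_remainder_bound (S N)) as Hrem.
    rewrite S_INR in Hrem. replace (INR N + 1 + 1) with (INR N + 2) in Hrem by ring.
    unfold zeta2. nra.
Qed.

(** * The functional equation *)

Lemma Derive_Li2 (y : R) : 0 < y < 1 -> Derive Li2 y = - ln (1 - y) / y.
Proof. intros Hy. apply is_derive_unique, is_derive_Li2; [apply Rabs_def1 | ]; lra. Qed.

Lemma ex_derive_Li2 (y : R) : 0 < y < 1 -> ex_derive Li2 y.
Proof. intros Hy. eexists. apply is_derive_Li2; [apply Rabs_def1 | ]; lra. Qed.

Definition dilog_combination (a : R) : R :=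
  2 * Li2 (2 - 1 / a) - 2 * Li2 a - Li2 ((2 * a - 1) / a ^ 2) - ln a ^ 2.

(* With [b = (1 - a) / a], the arguments [2 - 1/a], [a], [(2a - 1)/a^2] have
   [1 - _] equal to [b], [a b], [b^2], which makes the logarithms cancel. *)
Lemma is_derive_dilog_combination (a : R) : 1 / 2 < a < 1 -> is_derive dilog_combination a 0.
Proof.
  intros Ha. unfold dilog_combination.
  assert (Hy1 : 0 < 2 + - (1 * / a) < 1).
  { split; apply (Rmult_lt_reg_r a); try lra; field_simplify; lra. }
  assert (Hy2 : 0 < (2 * a + - (1)) * / (a * (a * 1)) < 1).
  { split; apply (Rmult_lt_reg_r (a * a)); try nra; field_simplify; nra. }
  auto_derive.
  - repeat split; try (apply ex_derive_Li2; lra); nra.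
  - change (Derive (fun x => Li2 x)) with (Derive Li2).
    rewrite (Derive_Li2 _ Hy1), (Derive_Li2 a ltac:(lra)), (Derive_Li2 _ Hy2).
    replace (1 - (2 + - (1 * / a))) with ((1 - a) / a) by (field; lra).
    replace (1 - (2 * a + - (1)) * / (a * (a * 1))) with ((1 - a) / a * ((1 - a) / a)) by (field; lra).
    assert (0 < (1 - a) / a) by (apply Rdiv_lt_0_compat; lra).
    rewrite ln_mult, ln_div by lra.
    field. repeat split; lra.
Qed.

Lemma dilog_combination_const (a b : R) : 1 / 2 < a < 1 -> 1 / 2 < b < 1 ->
  dilog_combination a = dilog_combination b.
Proof. apply eq_of_is_derive_0, is_derive_dilog_combination. Qed.

Lemma Li2_near_1 (y : R) (N : nat) : 0 <= y <= 1 -> 1 - y <= 4 / (INR N + 2) ^ 2 ->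
  Rabs (Li2 y - zeta2) <= 13 / (INR N + 2).
Proof.
  intros Hy Hclose. pose proof (zeta2_sub_Li2_bound y N Hy). pose proof (pos_INR N).
  rewrite Rabs_left1 by lra.
  assert ((INR N + 1) * (1 - y) <= 4 / (INR N + 2)).
  { apply Rle_trans with ((INR N + 2) * (4 / (INR N + 2) ^ 2)).
    - apply Rmult_le_compat; lra.
    - right. field. lra. }
  assert (13 / (INR N + 2) = 4 / (INR N + 2) + 9 / (INR N + 2)) by (field; lra).
  lra.
Qed.

Lemma dilog_combination_near_1 (N : nat) :
  Rabs (dilog_combination (1 - 1 / (INR N + 2) ^ 2) + zeta2) <= 66 / (INR N + 2).
Proof.
  pose proof (pos_INR N).
  assert (Hr : 0 < 1 / (INR N + 2) <= 1 / 2).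
  { split; [apply Rdiv_lt_0_compat; lra |].
    apply Rmult_le_compat_l; [lra | apply Rinv_le_contravar; lra]. }
  replace (1 / (INR N + 2) ^ 2) with ((1 / (INR N + 2)) ^ 2) by (field; lra).
  replace (66 / (INR N + 2)) with (66 * (1 / (INR N + 2))) by (field; lra).
  assert (Hnear := fun y => Li2_near_1 y N).
  replace (13 / (INR N + 2)) with (13 * (1 / (INR N + 2))) in Hnear by (field; lra).
  replace (4 / (INR N + 2) ^ 2) with (4 * (1 / (INR N + 2)) ^ 2) in Hnear by (field; lra).
  generalize dependent (1 / (INR N + 2)). clear. intros r Hr Hnear.
  set (t := 1 - r ^ 2).
  assert (Ht : 3 / 4 <= t < 1) by (unfold t; nra).
  set (s := 1 / t).
  assert (Hs : 1 < s <= 4 / 3).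
  { unfold s. split; [apply (Rmult_lt_reg_r t) | apply (Rmult_le_reg_r t)]; try lra;
      field_simplify; lra. }
  assert (Hr2 : r ^ 2 = 1 - t) by (unfold t; ring).
  assert (E1 : 2 - 1 / t = 1 - r ^ 2 * s) by (rewrite Hr2; unfold s; field; lra).
  assert (E3 : (2 * t - 1) / t ^ 2 = 1 - (r ^ 2 * s) ^ 2) by (rewrite Hr2; unfold s; field; lra).
  assert (Hrs : 0 < r ^ 2 * s <= 1 / 3) by (split; nra).
  assert (H1 : Rabs (Li2 (2 - 1 / t) - zeta2) <= 13 * r) by (rewrite E1; apply Hnear; nra).
  assert (H2 : Rabs (Li2 t - zeta2) <= 13 * r) by (apply Hnear; unfold t; nra).
  assert (H3 : Rabs (Li2 ((2 * t - 1) / t ^ 2) - zeta2) <= 13 * r) by (rewrite E3; apply Hnear; nra).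
  assert (Hln : ln t ^ 2 <= r).
  { pose proof (one_sub_inv_le_ln t ltac:(lra)).
    assert (ln t < 0) by (rewrite <- ln_1; apply ln_increasing; lra).
    assert (1 - 1 / t = - (r ^ 2 * s)) by (rewrite Hr2; unfold s; field; lra).
    nra. }
  unfold dilog_combination.
  apply Rabs_le_between in H1, H2, H3. pose proof (pow2_ge_0 (ln t)).
  apply Rabs_le. lra.
Qed.

Lemma dilog_combination_eq (a : R) : 1 / 2 < a < 1 -> dilog_combination a = - zeta2.
Proof.
  intros Ha.
  assert (Hlim : is_lim_seq (fun N => dilog_combination (1 - 1 / (INR N + 2) ^ 2)) (- zeta2)).
  { apply (is_lim_seq_of_dist_le _ _ 66). intros N.
    unfold Rminus at 1. rewrite Ropp_involutive. apply dilog_combination_near_1. }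
  apply (is_lim_seq_ext _ (fun _ => dilog_combination a)) in Hlim.
  - apply is_lim_seq_unique in Hlim. rewrite Lim_seq_const in Hlim. injection Hlim. easy.
  - intros N. apply dilog_combination_const; [| exact Ha].
    pose proof (pos_INR N).
    assert (0 < 1 / (INR N + 2) ^ 2 <= 1 / 4).
    { split; [apply Rdiv_lt_0_compat; nra |].
      apply Rmult_le_compat_l; [lra | apply Rinv_le_contravar; nra]. }
    lra.
Qed.

(** * The root of [Pn] *)

Lemma Pn_mul_sub_1 (n : nat) (x : R) : (0 < n)%nat ->
  (x - 1) * Pn n x = x ^ (2 * n + 2) - 2 * x ^ n + 1.
Proof.
  intros Hn. unfold Pn.
  rewrite (sum_eq _ (fun k => x ^ k * x ^ n)) by (intros; rewrite pow_add; ring).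
  rewrite <- scal_sum. change (pow x) with (fun k => x ^ k).
  assert (G1 := GP_finite x (n + 1)). assert (G2 := GP_finite x (n - 1)).
  replace (n - 1 + 1)%nat with n in G2 by lia.
  replace (2 * n + 2)%nat with (n + (n + 1 + 1))%nat by lia.
  apply (f_equal (Rmult (x ^ n))) in G1.
  rewrite pow_add. lra.
Qed.

Lemma Pn_1 (n : nat) : (0 < n)%nat -> Pn n 1 = 2.
Proof.
  intros Hn. unfold Pn.
  rewrite !(sum_eq (fun k => 1 ^ _) (fun _ => 1)) by (intros; apply pow1).
  rewrite !sum_cte, !S_INR, plus_INR, minus_INR by lia. simpl. ring.
Qed.

Lemma Pn_root_spec (n : nat) (u : R) : (0 < n)%nat -> 0 < u -> Pn n u = 0 ->
  1 / 2 < u ^ n < 1 /\ u ^ 2 = (2 * u ^ n - 1) / (u ^ n) ^ 2.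
Proof.
  intros Hn Hu HP.
  assert (E := Pn_mul_sub_1 n u Hn). rewrite HP, Rmult_0_r in E.
  replace (2 * n + 2)%nat with (n + n + 2)%nat in E by lia. rewrite !pow_add in E.
  set (a := u ^ n) in *. assert (Ha0 : 0 < a) by (apply pow_lt, Hu).
  assert (Hq : a ^ 2 * u ^ 2 = 2 * a - 1) by nra.
  assert (Hu1 : u < 1).
  { destruct (Rtotal_order u 1) as [Hlt | [Heq | Hgt]]; [exact Hlt | |].
    - subst u. rewrite Pn_1 in HP by exact Hn. lra.
    - assert (1 < u ^ 2) by (apply Rlt_pow_R1; [lra | lia]).
      assert (0 < a ^ 2 * (u ^ 2 - 1)) by (apply Rmult_lt_0_compat; nra).
      pose proof (pow2_ge_0 (a - 1)). nra. }
  split; [split |].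
  - assert (0 < a ^ 2 * u ^ 2) by (apply Rmult_lt_0_compat; apply pow_lt; lra). lra.
  - apply pow_lt_1_compat; [lra | exact Hn].
  - field_simplify_eq; [lra | lra].
Qed.

Theorem theorem3p2 (n : nat) (u : R) :
  (0 < n)%nat -> 0 < u -> Pn n u = 0 ->
  2 * Li2 (u ^ (n + 2)) - 2 * Li2 (u ^ n) - Li2 (u ^ 2)
    - (INR n) ^ 2 * (ln u) ^ 2 = - zeta2.
Proof.
  intros Hn Hu HP.
  destruct (Pn_root_spec n u Hn Hu HP) as [Ha Hq].
  assert (Hn2 : u ^ (n + 2) = 2 - 1 / u ^ n) by (rewrite pow_add, Hq; field; lra).
  rewrite <- (dilog_combination_eq (u ^ n) Ha), Hn2, Hq.
  unfold dilog_combination. rewrite ln_pow by exact Hu. ring.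
Qed.
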